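(* There exist constants $c,C>0$ and infinitely many $n\in\mathbb{N}$ such that for each of them there is a connected graph $G$ on $n$ vertices of maximum degree $3$, vertices $a,b\in V(G)$, and a set $\mathcal{X}\subseteq V(G)$ with $|\mathcal{X}|\le C\sqrt{n}$ such that, in the geodesic-biased random walk on $G$ with target $b$ and excited set $\mathcal{X}$, started at $a$ (for any choice of the fixed shortest paths), \[\mathbb{E}[\tau_a(b,\mathcal{X})]\ \ge\ c\,\exp\left(\frac{\sqrt[4]{n}}{100}\right).\]
   Context: Geodesic-biased random walk: let $G$ be a finite connected graph, $b\in V(G)$ a target vertex and $\mathcal{X}\subseteq V(G)$ a set of excited vertices. For every vertex $x\neq b$ fix in advance one shortest path (geodesic) in $G$ from $x$ to $b$. A walker moves in discrete time: from an unexcited vertex ($x\notin\mathcal{X}$) she moves to a uniformly random neighbour of $x$; from an excited vertex ($x\in\mathcal{X}$) she moves deterministically to the next vertex on the fixed shortest path from $x$ to $b$. $\tau_a(b,\mathcal{X})$ denotes the first time the walker started at $a$ visits $b$. *)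

From mathcomp Require Import all_boot.
From Stdlib Require Import Reals.

Set Implicit Arguments.
Unset Strict Implicit.
Unset Printing Implicit Defensive.

Definition simple_graph (V : finType) (e : rel V) : Prop :=
  symmetric e /\ irreflexive e.

Definition connected_graph (V : finType) (e : rel V) : Prop :=
  forall x y : V, connect e x y.

Definition deg (V : finType) (e : rel V) (x : V) : nat := #|[pred y | e x y]|.

Definition max_degree_3 (V : finType) (e : rel V) : Prop :=
  (forall x, deg e x <= 3)%N /\ exists x, deg e x = 3%N.

Definition geodesic (V : finType) (e : rel V) (x b : V) (p : seq V) : Prop :=
  path e x p /\ last x p = b /\
  (forall q : seq V, path e x q -> last x q = b -> (size p <= size q)%N).

(* Choice of fixed shortest paths: g x is the fixed geodesic from x to b
   (listing the vertices after x), for every x <> b. *)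
Definition geodesic_choice (V : finType) (e : rel V) (b : V)
    (g : V -> seq V) : Prop :=
  forall x, x != b -> geodesic e x b (g x).

Definition next_on (V : finType) (g : V -> seq V) (x : V) : V := head x (g x).

Local Open Scope R_scope.

Definition trans (V : finType) (e : rel V) (X : {set V}) (g : V -> seq V)
    (x y : V) : R :=
  if x \in X then (if y == next_on g x then 1 else 0)
  else (if e x y then / INR (deg e x) else 0).

(* q t y = P(X_t = y and X_s <> b for all s <= t), walker started at a. *)
Fixpoint surv_mass (V : finType) (e : rel V) (X : {set V}) (g : V -> seq V)
    (a b : V) (t : nat) (y : V) : R :=
  match t with
  | O => if y == b then 0 else (if y == a then 1 else 0)
  | S t' => if y == b then 0 else
      \big[Rplus/0]_(x : V) (surv_mass e X g a b t' x * trans e X g x y)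
  end.

(* P(tau_a(b,X) > t) *)
Definition tail_prob (V : finType) (e : rel V) (X : {set V}) (g : V -> seq V)
    (a b : V) (t : nat) : R :=
  \big[Rplus/0]_(y : V) surv_mass e X g a b t y.

(* E[tau] = sum_{t >= 0} P(tau > t) (a value in [0, +oo]);
   "E[tau] >= K" means the supremum of the partial sums is >= K. *)
Definition expected_hit_ge (V : finType) (e : rel V) (X : {set V})
    (g : V -> seq V) (a b : V) (K : R) : Prop :=
  forall M : R, M < K ->
    exists T : nat, M < \big[Rplus/0]_(t < T) tail_prob e X g a b t.

(* The graph is a comb: [m] rows, each a path of [w] vertices, whose left ends
   are strung into a path from [a] to [b] and whose excited right ends are
   strung into a path leading back to [a].  A walk that enters a row reaches its
   far end with probability about [1 / w] and is then returned to [a], so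
   climbing the left path up to [b] takes exponentially many restarts.
   Quantitatively, any [f] with [f b = 0], bounded above, and
   [f x <= 1 + E f(next step)] off [b] gives [E tau_a >= f a] (optional
   stopping for [f (X_t) + t]).  Such an [f] is [lam ^ (m + 1) - lam ^ j] at
   the [j]-th vertex of the left path, linear along each row, as long as
   [(lam - 1) ^ 2 (w - 1) <= 1].  Taking [m = 4 k^2 - 1], [w = 8 k^2 + 2] (so
   [n = 32 k^4]) and [lam = 1 + 1 / (4 k)], the excited set has [m <= sqrt n]
   vertices and [f a = lam ^ (4 k^2) - 1 >= 2 ^ k - 1]. *)

From mathcomp Require Import all_boot zify.
From mathcomp Require Import Rstruct.
From Stdlib Require Import Reals Lra Classical.

Set Implicit Arguments.
Unset Strict Implicit.
Unset Printing Implicit Defensive.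

Local Open Scope R_scope.

Lemma sumR_le (I : finType) (F G : I -> R) :
  (forall i, F i <= G i) -> \big[Rplus/0]_(i : I) F i <= \big[Rplus/0]_(i : I) G i.
Proof. by move=> FG; apply: (big_ind2 (fun x y => x <= y)) => // *; lra. Qed.

Lemma sumR_ge0 (I : finType) (F : I -> R) :
  (forall i, 0 <= F i) -> 0 <= \big[Rplus/0]_(i : I) F i.
Proof. by move=> F0; apply: (big_ind (fun x => 0 <= x)) => // *; lra. Qed.

Lemma sumR_dirac (I : finType) (z : I) (F : I -> R) :
  \big[Rplus/0]_(y : I) ((if y == z then 1 else 0) * F y) = F z.
Proof.
rewrite (bigD1 z) //= eqxx big1 ?Rplus_0_r ?Rmult_1_l //.
by move=> y /negbTE ->; rewrite Rmult_0_l.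
Qed.

Lemma bernoulli_ineq x n : 0 <= x -> 1 + INR n * x <= (1 + x) ^ n.
Proof.
move=> x_ge0; elim: n => [|n IH]; first by rewrite /=; lra.
by rewrite S_INR /=; have := pos_INR n; nra.
Qed.

Lemma two_le_pow_1_inv n : (0 < n)%nat -> 2 <= (1 + / INR n) ^ n.
Proof.
move=> n_gt0; have n_pos : 0 < INR n by apply: lt_0_INR; apply/ltP.
have := bernoulli_ineq n (Rlt_le _ _ (Rinv_0_lt_compat _ n_pos)).
by rewrite Rinv_r; lra.
Qed.

Section HittingTime.
Variables (V : finType) (e : rel V) (X : {set V}) (g : V -> seq V) (a b : V).

Local Notation u := (surv_mass e X g a b).
Local Notation P := (trans e X g).

Lemma trans_ge0 x y : 0 <= P x y.
Proof.
rewrite /trans; case: (x \in X); first by case: (y == _); lra.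
case: (e x y); last lra.
by have [/Rinv_0_lt_compat/Rlt_le | <-] := Rle_lt_or_eq_dec _ _ (pos_INR (deg e x));
  rewrite ?Rinv_0; lra.
Qed.

Lemma surv_mass_target t : u t b = 0.
Proof. by case: t => [|t] /=; rewrite eqxx. Qed.

Lemma surv_mass_ge0 t y : 0 <= u t y.
Proof.
elim: t y => [|t IH] y /=; first by case: (y == b); [lra | case: (y == a); lra].
case: (y == b); first lra.
by apply: sumR_ge0 => x; apply: Rmult_le_pos; [apply: IH | apply: trans_ge0].
Qed.

Lemma surv_massS_sum (f : V -> R) t : f b = 0 ->
  \big[Rplus/0]_(y : V) (u t.+1 y * f y) =
  \big[Rplus/0]_(x : V) (u t x * \big[Rplus/0]_(y : V) (P x y * f y)).
Proof.
move=> fb.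
rewrite (eq_bigr (fun y => \big[Rplus/0]_(x : V) (u t x * P x y * f y))); last first.
  move=> y _ /=; case: eqP => [->|_]; last by rewrite big_distrl.
  by rewrite fb Rmult_0_r; apply/esym/big1 => x _; rewrite Rmult_0_r.
rewrite exchange_big; apply: eq_bigr => x _; rewrite big_distrr.
by apply: eq_bigr => y _; rewrite Rmult_assoc.
Qed.

Definition tail_sum T := \big[Rplus/0]_(t < T) tail_prob e X g a b t.

Variables (f : V -> R) (F : R).
Hypotheses (neq_ab : a != b) (f_target : f b = 0) (f_le : forall x, f x <= F) (F_gt0 : 0 < F).
Hypothesis f_super :
  forall x, x != b -> f x <= 1 + \big[Rplus/0]_(y : V) (P x y * f y).

(* Optional stopping at the deterministic time T for the supermartingale
   [f (X_t) + t], with the mass that has not reached [b] kept explicit. *)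
Lemma tail_sum_supersolution T :
  f a <= tail_sum T + \big[Rplus/0]_(y : V) (u T y * f y).
Proof.
elim: T => [|T IH].
  rewrite /tail_sum big_ord0 Rplus_0_l (bigD1 a) //= (negbTE neq_ab) eqxx.
  rewrite big1 ?Rplus_0_r ?Rmult_1_l; first exact: Rle_refl.
  by move=> y /negbTE ->; case: (y == b); apply: Rmult_0_l.
rewrite /tail_sum big_ord_recr /= -/(tail_sum T) surv_massS_sum // /tail_prob.
apply: (Rle_trans _ _ _ IH); rewrite Rplus_assoc; apply: Rplus_le_compat_l.
rewrite -big_split /=; apply: sumR_le => x.
have [->|xb] := eqVneq x b; first by rewrite surv_mass_target !Rmult_0_l; lra.
by have := f_super xb; have := surv_mass_ge0 T x; nra.
Qed.

Lemma expected_hit_ge_supersolution : expected_hit_ge e X g a b (f a).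
Proof.
move=> M HM; pose eta := (f a - M) / (2 * F).
have eta_gt0 : 0 < eta by apply: Rdiv_lt_0_compat; lra.
have [[T HT] | no_small_tail] := classic (exists T, tail_prob e X g a b T <= eta).
  exists T; have := tail_sum_supersolution T.
  have : \big[Rplus/0]_(y : V) (u T y * f y) <= F * tail_prob e X g a b T.
    rewrite /tail_prob big_distrr; apply: sumR_le => y /=.
    by rewrite (Rmult_comm F); apply: Rmult_le_compat_l; [apply: surv_mass_ge0 | apply: f_le].
  have : F * tail_prob e X g a b T <= F * eta by apply: Rmult_le_compat_l; lra.
  have : F * eta = (f a - M) / 2 by rewrite /eta; field; lra.
  rewrite /tail_sum; lra.
have [T HT] := INR_archimed eta M eta_gt0.
exists T; apply: (Rlt_le_trans _ _ _ HT); elim: T {HT} => [|T IH].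
  by rewrite big_ord0 /=; lra.
rewrite big_ord_recr S_INR Rmult_plus_distr_r Rmult_1_l /=.
apply: Rplus_le_compat IH _; apply/Rlt_le/Rnot_le_lt => small.
by apply: no_small_tail; exists T.
Qed.

End HittingTime.

Lemma expected_hit_ge_le (V : finType) (e : rel V) X g a b K1 K2 :
  K2 <= K1 -> expected_hit_ge e X g a b K1 -> expected_hit_ge e X g a b K2.
Proof. by move=> K21 hit M M_lt; apply: hit; lra. Qed.

Local Close Scope R_scope.

Section CombCells.
Variables (m w : nat).

(* Cells [(i, t)] with [i < m], [t < w] form [m] rows, each a path.  The left
   ends [(i, 0)] are chained into a path leading to [b = (m, 1)], attached to
   [(m - 1, 0)]; the right ends [(i, w - 1)] are chained too, and [a = (m, 0)]
   is joined to both [(0, 0)] and [(0, w - 1)]. *)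
Definition comb_cell (p : nat * nat) : bool :=
  ((p.1 < m) && (p.2 < w)) || ((p.1 == m) && (p.2 < 2)).

Definition comb_arc (p q : nat * nat) : bool :=
  let: (i, t) := p in let: (i', t') := q in
  [|| (i < m) && (i' == i) && (t' == t.+1) && (t' < w),
      (i.+1 < m) && (t == 0) && (t' == 0) && (i' == i.+1),
      (i.+1 < m) && (t == w.-1) && (t' == w.-1) && (i' == i.+1),
      (i == m) && (t == 0) && (i' == 0) && (t' == 0),
      (i == m) && (t == 0) && (i' == 0) && (t' == w.-1) |
      (i.+1 == m) && (t == 0) && (i' == m) && (t' == 1)].

Definition comb_adj p q := comb_arc p q || comb_arc q p.

Definition comb_nbrs (p : nat * nat) : seq (nat * nat) :=
  let: (i, t) := p in
  if i == m then (if t == 0 then [:: (0, 0); (0, w.-1)] else [:: (m.-1, 0)])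
  else
    (if t == 0 then [::] else [:: (i, t.-1)]) ++
    (if t.+1 < w then [:: (i, t.+1)] else [::]) ++
    (if (t == 0) || (t == w.-1) then
       (if i == 0 then (m, 0) else (i.-1, t)) ::
       (if i.+1 < m then [:: (i.+1, t)] else if t == 0 then [:: (m, 1)] else [::])
     else [::]).

Hypothesis m_gt0 : 0 < m.
Hypothesis w_large : 2 * m + 4 <= w.

Lemma comb_adjC p q : comb_adj p q = comb_adj q p.
Proof. by rewrite /comb_adj orbC. Qed.

Lemma comb_adjpp p : comb_adj p p = false.
Proof. by case: p => i t; rewrite /comb_adj /comb_arc /=; lia. Qed.

Lemma comb_adj_row i t i' t' :
  i < m -> i' = i -> t' = t.+1 -> t' < w -> comb_adj (i, t) (i', t').
Proof. by move=> *; apply/orP; left; apply/orP; left; lia. Qed.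

Lemma comb_adj_left i t i' t' :
  t = 0 -> t' = 0 -> i' = i.+1 -> i' < m -> comb_adj (i, t) (i', t').
Proof. by move=> *; apply/orP; left; apply/orP/or_intror; apply/orP; left; lia. Qed.

Lemma comb_adj_right i t i' t' :
  t = w.-1 -> t' = w.-1 -> i' = i.+1 -> i' < m -> comb_adj (i, t) (i', t').
Proof. by move=> *; apply/orP; left; do 2 apply/orP/or_intror; apply/orP; left; lia. Qed.

Lemma comb_adj_a_left i t i' t' :
  i = m -> t = 0 -> i' = 0 -> t' = 0 -> comb_adj (i, t) (i', t').
Proof. by move=> *; apply/orP; left; do 3 apply/orP/or_intror; apply/orP; left; lia. Qed.

Lemma comb_adj_a_right i t i' t' :
  i = m -> t = 0 -> i' = 0 -> t' = w.-1 -> comb_adj (i, t) (i', t').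
Proof. by move=> *; apply/orP; left; do 4 apply/orP/or_intror; apply/orP; left; lia. Qed.

Lemma comb_adj_b i t i' t' :
  i.+1 = m -> t = 0 -> i' = m -> t' = 1 -> comb_adj (i, t) (i', t').
Proof. by move=> *; apply/orP; left; do 5 apply/orP/or_intror; lia. Qed.

Ltac comb_adj_solve :=
  first [ apply: comb_adj_row; lia | apply: comb_adj_left; lia
        | apply: comb_adj_right; lia | apply: comb_adj_a_left; lia
        | apply: comb_adj_a_right; lia | apply: comb_adj_b; lia ].

Ltac split_bool := repeat match goal with
  | H : is_true (_ || _) |- _ => case/orP: H => H
  | H : is_true (_ && _) |- _ => let H1 := fresh in let H2 := fresh in case/andP: H => H1 H2
  end.

Lemma comb_adjE p q : comb_cell p -> comb_cell q -> comb_adj p q = (q \in comb_nbrs p).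
Proof.
case: p => i t; case: q => i' t'; rewrite /comb_cell /comb_nbrs /= => Hp Hq.
apply/idP/idP => H.
  move: H; rewrite /comb_adj /comb_arc => H; split_bool;
  repeat case: ifP => ?; rewrite ?mem_cat ?inE ?xpair_eqE /=; lia.
move: H; repeat case: ifP => ?; rewrite ?mem_cat ?inE ?xpair_eqE /= => H;
  repeat (case/orP: H => H); (try by []); case/andP: H => /eqP -> /eqP ->;
  first [comb_adj_solve | rewrite comb_adjC; comb_adj_solve].
Qed.

Lemma comb_nbrs_cell p : comb_cell p -> all comb_cell (comb_nbrs p).
Proof.
case: p => i t; rewrite /comb_cell /comb_nbrs /= => Hp.
by repeat case: ifP => ?; rewrite /= ?andbT; lia.
Qed.

Lemma comb_nbrs_uniq p : comb_cell p -> uniq (comb_nbrs p).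
Proof.
case: p => i t; rewrite /comb_cell /comb_nbrs /= => Hp.
by repeat case: ifP => ?; rewrite /= ?inE ?xpair_eqE ?andbT; lia.
Qed.

Lemma size_comb_nbrs p : comb_cell p -> size (comb_nbrs p) <= 3.
Proof.
case: p => i t; rewrite /comb_cell /comb_nbrs /= => Hp.
by repeat case: ifP => ?; rewrite /=; lia.
Qed.

Lemma size_comb_nbrs00 : size (comb_nbrs (0, 0)) = 3.
Proof. by rewrite /comb_nbrs /=; repeat case: ifP => ?; rewrite /=; lia. Qed.

(* A 1-Lipschitz function vanishing at [b], exact on the right ends. *)
Definition comb_dist_lb (p : nat * nat) : nat :=
  if p.1 == m then (if p.2 == 0 then m.+1 else 0)
  else minn (m - p.1 + p.2) (m.+2 + p.1).

Lemma comb_dist_lb_adj p q : comb_cell p -> comb_cell q -> comb_adj p q ->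
  comb_dist_lb p <= (comb_dist_lb q).+1.
Proof.
case: p => i t; case: q => i' t'.
rewrite /comb_cell /comb_adj /comb_arc /comb_dist_lb /= => Hp Hq H.
by split_bool; repeat case: ifP => ?; lia.
Qed.

Definition comb_prev_right (i : nat) : nat * nat := if i == 0 then (m, 0) else (i.-1, w.-1).

Definition comb_left_cell (j : nat) : nat * nat :=
  if j == 0 then (m, 0) else if j == m.+1 then (m, 1) else (j.-1, 0).

Lemma comb_nbrs_left i : i < m ->
  comb_nbrs (i, 0) = [:: (i, 1); comb_left_cell i; comb_left_cell i.+2].
Proof.
move=> Hi; rewrite /comb_nbrs /comb_left_cell /=.
by repeat case: ifP => ?; rewrite /=; do ?congr (_ :: _); try congr pair; lia.
Qed.

Lemma comb_nbrs_row i t : i < m -> 0 < t < w.-1 ->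
  comb_nbrs (i, t) = [:: (i, t.-1); (i, t.+1)].
Proof. by move=> Hi Ht; rewrite /comb_nbrs /=; repeat case: ifP => ?; rewrite /=; try lia. Qed.

Lemma comb_nbrs_a : comb_nbrs (m, 0) = [:: (0, 0); (0, w.-1)].
Proof. by rewrite /comb_nbrs /= eqxx. Qed.

End CombCells.

Section CombGraph.
Variables (m w : nat).
Hypothesis m_gt0 : 0 < m.
Hypothesis w_large : 2 * m + 4 <= w.

Local Notation n := (m * w).+2.
Local Notation comb_cell := (comb_cell m w).
Local Notation comb_adj := (comb_adj m w).
Local Notation comb_nbrs := (comb_nbrs m w).

Definition decode (x : nat) : nat * nat := (x %/ w, x %% w).
Definition encode (p : nat * nat) : nat := p.1 * w + p.2.

Definition cell (x : 'I_n) : nat * nat := decode x.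
Definition vertex (p : nat * nat) : 'I_n := inord (encode p).
Definition comb : rel 'I_n := fun x y => comb_adj (cell x) (cell y).

Lemma decodeK : cancel decode encode.
Proof. by move=> x; rewrite /encode /decode /= -divn_eq. Qed.

Lemma encodeK : {in comb_cell, cancel encode decode}.
Proof.
case=> i t; rewrite /in_mem /= /comb_cell /decode /encode /= => H.
have w_gt0 : 0 < w by lia.
by rewrite divnMDl // divn_small ?addn0 ?modnMDl ?modn_small //; lia.
Qed.

Lemma encode_lt p : comb_cell p -> encode p < n.
Proof.
case: p => i t; rewrite /comb_cell /encode /= => /orP [/andP [Hi Ht]|/andP [/eqP -> Ht]].
  have : i.+1 * w <= m * w by rewrite leq_mul2r Hi orbT.
  by lia.
by lia.
Qed.

Lemma cell_comb_cell (x : 'I_n) : comb_cell (cell x).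
Proof.
rewrite /comb_cell /cell /decode /=.
have w_gt0 : 0 < w by lia.
have := ltn_pmod x w_gt0; have := divn_eq x w; have := ltn_ord x.
set q := x %/ w; set r := x %% w => x_lt x_eq r_lt.
case: (ltnP q m) => [_|m_le_q] /=; first by rewrite r_lt.
have q_le_m : q <= m.
  rewrite leqNgt; apply/negP => q_gt.
  have : m.+1 * w <= q * w by rewrite leq_mul2r q_gt orbT.
  by rewrite mulSn; lia.
have q_m : q = m by lia.
by rewrite q_m eqxx /=; rewrite q_m in x_eq; lia.
Qed.

Lemma vertexK : {in comb_cell, cancel vertex cell}.
Proof. by move=> p Hp; rewrite /cell /vertex inordK ?encode_lt ?encodeK. Qed.

Lemma cellK : cancel cell vertex.
Proof.
move=> x; apply: ord_inj.
by rewrite /vertex inordK ?encode_lt ?cell_comb_cell // decodeK.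
Qed.

Lemma vertex_inj : {in comb_cell &, injective vertex}.
Proof. by move=> p q Hp Hq E; rewrite -(vertexK Hp) -(vertexK Hq) E. Qed.

Lemma comb_vertex p q : comb_cell p -> comb_cell q ->
  comb (vertex p) (vertex q) = comb_adj p q.
Proof. by move=> Hp Hq; rewrite /comb !vertexK. Qed.

Lemma combE x y : comb x y = (y \in map vertex (comb_nbrs (cell x))).
Proof.
have nbrs_cell := allP (comb_nbrs_cell m_gt0 w_large (cell_comb_cell x)).
rewrite /comb comb_adjE ?cell_comb_cell //.
apply/idP/idP => [H|/mapP [q Hq ->]]; first by rewrite -(cellK y); apply: map_f.
by rewrite vertexK //; apply: nbrs_cell.
Qed.

Lemma comb_nbrs_vertex_uniq x : uniq (map vertex (comb_nbrs (cell x))).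
Proof.
have nbrs_cell := allP (comb_nbrs_cell m_gt0 w_large (cell_comb_cell x)).
rewrite map_inj_in_uniq ?comb_nbrs_uniq ?cell_comb_cell //.
by move=> p q /nbrs_cell Hp /nbrs_cell Hq; apply: vertex_inj.
Qed.

Lemma deg_comb x : deg comb x = size (comb_nbrs (cell x)).
Proof.
rewrite /deg -(size_map vertex) -(card_uniqP (comb_nbrs_vertex_uniq x)).
by apply: eq_card => y; rewrite inE combE.
Qed.

Local Notation comb_prev_right := (comb_prev_right m w).

Ltac solve_cell := rewrite ?unfold_in /comb_cell /=; lia.

Definition comb_excited : {set 'I_n} := [set x | (cell x).2 == w.-1].
Definition comb_a : 'I_n := vertex (m, 0).
Definition comb_b : 'I_n := vertex (m, 1).

Lemma comb_vertex_adj p q : comb_cell p -> comb_cell q -> comb_adj p q -> comb (vertex p) (vertex q).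
Proof. by move=> Hp Hq H; rewrite comb_vertex. Qed.

Lemma comb_simple : simple_graph comb.
Proof. by split=> [x y | x]; rewrite /comb ?comb_adjpp // comb_adjC. Qed.

Lemma comb_connect_a x : connect comb x comb_a.
Proof.
have left_to_a i : i < m -> connect comb (vertex (i, 0)) comb_a.
  elim: i => [|i IH] Hi.
    apply: connect1; apply: comb_vertex_adj; try solve_cell.
    by rewrite comb_adjC; apply: comb_adj_a_left.
  apply: connect_trans (IH (ltnW Hi)); apply: connect1; apply: comb_vertex_adj; try solve_cell.
  by rewrite comb_adjC; apply: comb_adj_left.
rewrite -(cellK x); have := cell_comb_cell x.
case: (cell x) => i t; rewrite /comb_cell /= => /orP [/andP [Hi Ht]|/andP [/eqP -> Ht]].
  apply: connect_trans (left_to_a _ Hi).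
  elim: t Ht => [|t IH] Ht; first exact: connect0.
  apply: connect_trans (IH (ltnW Ht)); apply: connect1; apply: comb_vertex_adj; try solve_cell.
  by rewrite comb_adjC; apply: comb_adj_row.
case: t Ht => [|[|t]] Ht; [exact: connect0 | | lia].
apply: connect_trans (left_to_a m.-1 _); last lia.
apply: connect1; apply: comb_vertex_adj; try solve_cell.
by rewrite comb_adjC; apply: comb_adj_b; lia.
Qed.

Lemma comb_connected : connected_graph comb.
Proof.
move=> x y; apply: connect_trans (comb_connect_a x) _.
rewrite (sym_connect_sym (e := comb)); first exact: comb_connect_a.
by move=> u v; rewrite /comb comb_adjC.
Qed.

Lemma comb_max_degree_3 : max_degree_3 comb.
Proof.
split=> [x | ]; first by rewrite deg_comb // size_comb_nbrs // cell_comb_cell.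
exists (vertex (0, 0)); rewrite deg_comb // vertexK; [exact: size_comb_nbrs00 | solve_cell].
Qed.

Lemma card_comb_excited : #|comb_excited| <= m.
Proof.
apply: leq_trans (_ : #|[set vertex (nat_of_ord i, w.-1) | i : 'I_m]| <= m).
  apply/subset_leq_card/subsetP => x; rewrite inE => /eqP xt.
  rewrite -(cellK x); have := cell_comb_cell x.
  case: (cell x) xt => i t /= -> Hx; have Hi : i < m by move: Hx; rewrite /comb_cell /=; lia.
  by apply/imsetP; exists (Ordinal Hi).
by apply: leq_trans (leq_imset_card _ _) _; rewrite card_ord.
Qed.

Lemma comb_walk_size_ge y p : path comb y p -> last y p = comb_b ->
  comb_dist_lb m (cell y) <= size p.
Proof.
elim: p y => [|z p IH] y /=.
  by move=> _ ->; rewrite vertexK /comb_dist_lb /= ?eqxx //; solve_cell.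
case/andP => yz zp last_b; have := IH z zp last_b.
by have := comb_dist_lb_adj m_gt0 w_large (cell_comb_cell y) (cell_comb_cell z) yz; lia.
Qed.

Definition comb_walk_to_b (x : 'I_n) (l : nat) :=
  exists p, [/\ path comb x p, last x p = comb_b & size p = l].

Lemma comb_walk_to_bS x y l : comb x y -> comb_walk_to_b y l -> comb_walk_to_b x l.+1.
Proof. by move=> xy [p [yp last_b <-]]; exists (y :: p); rewrite /= xy. Qed.

Lemma comb_walk_a_to_b : comb_walk_to_b comb_a m.+1.
Proof.
have left_walk k : k < m -> comb_walk_to_b (vertex (m.-1 - k, 0)) k.+1.
  elim: k => [|k IH] Hk.
    exists [:: comb_b]; split=> //=; rewrite andbT; apply: comb_vertex_adj; try solve_cell.
    by apply: comb_adj_b; lia.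
  apply: comb_walk_to_bS (IH (ltnW Hk)); apply: comb_vertex_adj; try solve_cell.
  by apply: comb_adj_left; lia.
apply: comb_walk_to_bS (_ : comb_walk_to_b (vertex (0, 0)) m).
  by apply: comb_vertex_adj; try solve_cell; apply: comb_adj_a_left.
by have := left_walk m.-1; rewrite subnn prednK //; apply; lia.
Qed.

Lemma comb_walk_right_to_b i : i < m -> comb_walk_to_b (vertex (i, w.-1)) (i + m).+2.
Proof.
elim: i => [|i IH] Hi.
  apply: comb_walk_to_bS comb_walk_a_to_b; apply: comb_vertex_adj; try solve_cell.
  by rewrite comb_adjC; apply: comb_adj_a_right.
apply: comb_walk_to_bS (IH (ltnW Hi)); apply: comb_vertex_adj; try solve_cell.
by rewrite comb_adjC; apply: comb_adj_right; lia.
Qed.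

(* The walk along the right ends back through [a] has length [i + m + 2], which
   is what [comb_dist_lb] demands of every neighbour but [comb_prev_right i]. *)
Lemma next_on_comb_right g i : geodesic_choice comb comb_b g -> i < m ->
  next_on g (vertex (i, w.-1)) = vertex (comb_prev_right i).
Proof.
move=> geo_g Hi; have cell_i : comb_cell (i, w.-1) by solve_cell.
have neq_b : vertex (i, w.-1) != comb_b.
  apply/negP => /eqP /(congr1 cell); rewrite /comb_b !vertexK //; first by case; lia.
  by solve_cell.
have [gp [glast gmin]] := geo_g _ neq_b.
have [q [qp qlast qsize]] := comb_walk_right_to_b Hi.
have := gmin q qp qlast; rewrite qsize /next_on.
move: gp glast; case: (g _) => [|y p] /=; first by move=> _ E; rewrite E eqxx in neq_b.
case/andP => xy yp ylast size_p; have := comb_walk_size_ge yp ylast.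
move: xy; rewrite combE vertexK // => /mapP [r r_nbr ->].
have r_cell : comb_cell r by move/allP: (comb_nbrs_cell m_gt0 w_large cell_i); apply.
rewrite vertexK // => dist_r; congr (vertex _); move: r_nbr dist_r.
rewrite /comb_nbrs /comb_prev_right /=.
have -> : (i == m) = false by lia.
have -> : (w.-1 == 0) = false by lia.
have -> : (w.-1.+1 < w) = false by lia.
rewrite eqxx orbT /=; case: r r_cell => i' t' r_cell; rewrite /comb_dist_lb /=.
repeat case: ifP => ?; rewrite ?inE ?mem_cat ?xpair_eqE ?orbF /= => H;
  repeat (case/orP: H => H); try (case/andP: H => /eqP E1 /eqP E2; subst; try lia; done);
  lia.
Qed.

End CombGraph.

Section CombPotential.
Variables (m w : nat) (lam : R).
Hypothesis m_gt0 : (0 < m)%nat.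
Hypothesis w_large : (2 * m + 4 <= w)%nat.
Hypothesis lam_ge1 : (1 <= lam)%R.
Hypothesis lam_close : ((lam - 1) ^ 2 * INR w.-1 <= 1)%R.

Local Open Scope R_scope.

Local Notation L := (lam ^ m.+1).
Local Notation wR := (INR w.-1).

(* [L - lam ^ j] on the [j]-th vertex of the left path (whence [L = lam ^ m.+1],
   making it vanish at [b]), interpolated linearly along each row up to [L] at
   the excited right end. *)
Definition comb_potential (p : nat * nat) : R :=
  if p.1 == m then (if p.2 == 0%nat then L - 1 else 0)
  else L - lam ^ p.1.+1 * (1 - INR p.2 / wR).

Let wR_gt0 : 0 < wR.
Proof. by apply: lt_0_INR; apply/ltP; lia. Qed.

Let lam_le2 : lam <= 2.
Proof.
have : (lam - 1) ^ 2 <= 1.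
  apply: Rle_trans lam_close; rewrite -{1}(Rmult_1_r ((lam - 1) ^ 2)).
  apply: Rmult_le_compat_l; first exact: pow2_ge_0.
  by rewrite -/(INR 1); apply: le_INR; apply/leP; lia.
by nra.
Qed.

Lemma comb_potential_row i t : (i < m)%nat ->
  comb_potential (i, t) = L - lam ^ i.+1 * (1 - INR t / wR).
Proof. by move=> Hi; rewrite /comb_potential /=; have -> : (i == m) = false by lia. Qed.

Lemma comb_potential_right i : (i < m)%nat -> comb_potential (i, w.-1) = L.
Proof. by move=> Hi; rewrite comb_potential_row //; have := wR_gt0; move=> ?; field; lra. Qed.

Lemma comb_potential_left_cell j : (j <= m.+1)%nat ->
  comb_potential (comb_left_cell m j) = L - lam ^ j.
Proof.
move=> Hj; rewrite /comb_left_cell; case: ifP => [/eqP -> | j0].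
  by rewrite /comb_potential /= eqxx.
case: ifP => [/eqP -> | jm]; first by rewrite /comb_potential /= eqxx /=; ring.
rewrite comb_potential_row; last lia.
by rewrite prednK /Rdiv ?Rmult_0_l ?Rminus_0_r ?Rmult_1_r //; lia.
Qed.

Lemma comb_potential_le p : comb_cell m w p -> comb_potential p <= L.
Proof.
case: p => i t /orP [/andP [Hi Ht]|/andP [/eqP /= -> Ht]].
  rewrite /= in Hi Ht; rewrite comb_potential_row //.
  have : INR t / wR <= 1.
    apply: (Rmult_le_reg_r _ _ _ wR_gt0); rewrite /Rdiv Rmult_assoc Rinv_l ?Rmult_1_l ?Rmult_1_r.
      by apply: le_INR; apply/leP; lia.
    by have := wR_gt0; lra.
  move=> t_le; have : 0 <= lam ^ i.+1 * (1 - INR t / wR).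
    by apply: Rmult_le_pos; [apply: pow_le | ]; lra.
  by lra.
have : 1 <= L by apply: pow_R1_Rle.
by rewrite /comb_potential /= eqxx -/(lam ^ m.+1); case: ifP => _; lra.
Qed.

Definition comb_mean (f : nat * nat -> R) (p : nat * nat) : R :=
  \big[Rplus/0]_(q <- comb_nbrs m w p) (/ INR (size (comb_nbrs m w p)) * f q).

(* Convexity of [j |-> lam ^ j] on the left path beats the linear decrease along
   the row, because [(lam - 1) ^ 2 <= lam / (w - 1)]. *)
Lemma comb_potential_mean_left i : (i < m)%nat ->
  comb_potential (i, 0%nat) <= 1 + comb_mean comb_potential (i, 0%nat).
Proof.
move=> Hi; rewrite /comb_mean comb_nbrs_left //= !big_cons big_nil.
rewrite !comb_potential_row // !comb_potential_left_cell; try lia.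
have z_ge0 : 0 <= lam ^ i by apply: pow_le; lra.
have w_gt0 := wR_gt0.
have key : (lam - 1) ^ 2 <= lam / wR.
  apply: (Rmult_le_reg_r _ _ _ w_gt0).
  by rewrite /Rdiv Rmult_assoc Rinv_l ?Rmult_1_r; lra.
have convex : lam ^ i * ((lam - 1) ^ 2 - lam / wR) <= 0.
  have nonpos : (lam - 1) ^ 2 - lam / wR <= 0 by lra.
  by have := Rmult_le_compat_l _ _ _ z_ge0 nonpos; lra.
rewrite /= /Rdiv in convex *; lra.
Qed.

Lemma comb_potential_mean_row i t : (i < m)%nat -> (0 < t < w.-1)%nat ->
  comb_potential (i, t) <= 1 + comb_mean comb_potential (i, t).
Proof.
move=> Hi Ht; rewrite /comb_mean comb_nbrs_row //= !big_cons big_nil.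
rewrite !comb_potential_row // S_INR.
have -> : INR t.-1 = INR t - 1 by rewrite -{2}(prednK (_ : (0 < t)%nat)) ?S_INR; [ring | lia].
by rewrite /Rdiv; lra.
Qed.

Lemma comb_potential_mean_a : comb_potential (m, 0%nat) <= 1 + comb_mean comb_potential (m, 0%nat).
Proof.
rewrite /comb_mean comb_nbrs_a !big_cons big_nil comb_potential_right //.
rewrite -[(m, 0%nat)]/(comb_left_cell m 0) comb_potential_left_cell //.
by rewrite comb_potential_row //=; have := lam_le2; lra.
Qed.

Lemma comb_potential_prev_right i : (i < m)%nat ->
  comb_potential (i, w.-1) <= 1 + comb_potential (comb_prev_right m w i).
Proof.
move=> Hi; rewrite comb_potential_right // /comb_prev_right.
case: ifP => [_ | i0]; last by rewrite comb_potential_right; [lra | lia].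
by rewrite -[(m, 0%nat)]/(comb_left_cell m 0) comb_potential_left_cell //=; lra.
Qed.

End CombPotential.

Section CombHitting.
Variables (m w : nat) (lam : R).
Hypothesis m_gt0 : (0 < m)%nat.
Hypothesis w_large : (2 * m + 4 <= w)%nat.
Hypothesis lam_ge1 : (1 <= lam)%R.
Hypothesis lam_close : ((lam - 1) ^ 2 * INR w.-1 <= 1)%R.

Local Open Scope R_scope.
Local Notation n := (m * w).+2.
Local Notation cell := (@cell m w).
Local Notation vertex := (@vertex m w).
Local Notation comb := (@comb m w).
Local Notation f := (fun x : 'I_n => comb_potential m w lam (cell x)).

Lemma sum_comb (x : 'I_n) c (F : 'I_n -> R) :
  \big[Rplus/0]_(y : 'I_n) ((if comb x y then c else 0) * F y) =
  \big[Rplus/0]_(q <- comb_nbrs m w (cell x)) (c * F (vertex q)).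
Proof.
rewrite (eq_bigr (fun y => if y \in map vertex (comb_nbrs m w (cell x)) then c * F y else 0)).
  by rewrite -big_mkcond /= -big_uniq ?comb_nbrs_vertex_uniq //= big_map.
by move=> y _; rewrite combE //; case: ifP => _; lra.
Qed.

Lemma sum_trans_comb_potential g (x : 'I_n) : x \notin comb_excited m w ->
  \big[Rplus/0]_(y : 'I_n) (trans comb (comb_excited m w) g x y * f y) =
  comb_mean m w (comb_potential m w lam) (cell x).
Proof.
move=> x_unexc; rewrite /trans (negbTE x_unexc) sum_comb // deg_comb //.
rewrite /comb_mean big_seq [in RHS]big_seq; apply: eq_bigr => q q_nbr.
have := allP (comb_nbrs_cell m_gt0 w_large (cell_comb_cell m_gt0 w_large x)) q q_nbr.
by move=> q_cell; rewrite vertexK.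
Qed.

Lemma comb_potential_super g (x : 'I_n) : geodesic_choice comb (comb_b m w) g ->
  x != comb_b m w ->
  f x <= 1 + \big[Rplus/0]_(y : 'I_n) (trans comb (comb_excited m w) g x y * f y).
Proof.
move=> geo_g x_b; have x_cell := cell_comb_cell m_gt0 w_large x.
have [x_exc | x_unexc] := boolP (x \in comb_excited m w).
  have [i Hi x_eq] : exists2 i, (i < m)%nat & x = vertex (i, w.-1).
    move: x_exc; rewrite inE => /eqP t_eq; exists (cell x).1.
      by move: x_cell t_eq; rewrite /comb_cell; case: (cell x) => i t /=; lia.
    by rewrite -[LHS](cellK m_gt0 w_large x) -t_eq; case: (cell x).
  subst x; rewrite /trans x_exc sumR_dirac next_on_comb_right // !vertexK //.
  - exact: comb_potential_prev_right.
  - by rewrite unfold_in /comb_prev_right /comb_cell; case: ifP; rewrite /=; lia.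
  - by rewrite unfold_in /comb_cell /=; lia.
rewrite sum_trans_comb_potential //.
have : (cell x).2 != w.-1 by move: x_unexc; rewrite inE.
have : cell x != (m, 1%nat).
  by apply: contra x_b => /eqP x_b; rewrite -(cellK m_gt0 w_large x) x_b.
case: (cell x) x_cell => i t /orP [/andP [Hi Ht] | /andP [/eqP Hm Ht]] neq_b t_neq.
  rewrite /= in Hi Ht t_neq.
  have [-> | t_gt0] := posnP t; first exact: comb_potential_mean_left.
  by apply: comb_potential_mean_row => //; lia.
rewrite /= in Hm Ht; rewrite Hm in neq_b *; case: t Ht neq_b {t_neq} => [|[|t]] Ht neq_b; last by lia.
  exact: comb_potential_mean_a.
by rewrite eqxx in neq_b.
Qed.

Lemma comb_expected_hit_ge g : geodesic_choice comb (comb_b m w) g ->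
  expected_hit_ge comb (comb_excited m w) g (comb_a m w) (comb_b m w) (lam ^ m.+1 - 1).
Proof.
move=> geo_g; have cell_a : comb_cell m w (m, 0%nat) by rewrite /comb_cell /=; lia.
have cell_b : comb_cell m w (m, 1%nat) by rewrite /comb_cell /=; lia.
have f_a : f (comb_a m w) = lam ^ m.+1 - 1.
  by rewrite /comb_a vertexK // -[(m, 0%nat)]/(comb_left_cell m 0) comb_potential_left_cell.
rewrite -f_a; apply: (@expected_hit_ge_supersolution _ _ _ _ _ _ f (lam ^ m.+1)).
- by apply/eqP => /(congr1 cell); rewrite !vertexK //; case.
- by rewrite /comb_b vertexK // /comb_potential /= eqxx.
- by move=> x; apply: comb_potential_le => //; apply: cell_comb_cell.
- by apply: pow_lt; lra.
- by move=> x; apply: comb_potential_super.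
Qed.

End CombHitting.

Local Open Scope R_scope.


Lemma exp_qroot_le_two_pow k : (0 < k)%nat ->
  exp (sqrt (sqrt (32 * INR k ^ 4)) / 100) <= 2 ^ k.
Proof.
move=> k_gt0; have K_gt0 : 0 < INR k by apply: lt_0_INR; apply/ltP.
have qroot_le : sqrt (sqrt (32 * INR k ^ 4)) <= 3 * INR k.
  rewrite -(sqrt_square (3 * INR k)); last lra.
  apply: sqrt_le_1; [exact: sqrt_pos | nra |].
  rewrite -(sqrt_square (3 * INR k * (3 * INR k))); last nra.
  by apply: sqrt_le_1; rewrite /=; nra.
rewrite -(exp_ln (2 ^ k)) ?ln_pow; try (apply: pow_lt; lra); try lra.
(* [3 / 100 < 1 / 2 < ln 2] *)
by apply/Rlt_le/exp_increasing; have := ln_lt_2; nra.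
Qed.

Section CombParameters.
Variable k : nat.
Hypothesis k_gt0 : (0 < k)%nat.

Local Notation m := (4 * k * k)%nat.-1.
Local Notation w := (8 * k * k + 2)%nat.
Local Notation lam := (1 + / (4 * INR k)).

Lemma comb_param_m_gt0 : (0 < m)%nat. Proof. by nia. Qed.

Lemma comb_param_w_large : (2 * m + 4 <= w)%nat. Proof. by nia. Qed.

Lemma comb_param_size : INR (m * w).+2 = 32 * INR k ^ 4.
Proof.
have -> : (m * w).+2 = (32 * k * k * k * k)%nat by nia.
by rewrite -!multE !mult_INR /=; ring.
Qed.

Lemma comb_param_lam_ge1 : 1 <= lam.
Proof.
have : 0 < / (4 * INR k); last lra.
by apply/Rinv_0_lt_compat/Rmult_lt_0_compat; [lra | apply/lt_0_INR/ltP].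
Qed.

Lemma comb_param_lam_close : (lam - 1) ^ 2 * INR w.-1 <= 1.
Proof.
have K_ge1 : 1 <= INR k by rewrite -/(INR 1); apply/le_INR/leP.
have -> : INR w.-1 = 8 * INR k ^ 2 + 1.
  by rewrite (_ : w.-1 = 8 * k * k + 1)%nat ?addn1 ?S_INR -?multE ?mult_INR /=; [ring | lia].
set u := / (4 * INR k); have uK : u * INR k = / 4 by rewrite /u; field; lra.
have u_gt0 : 0 < u by apply: Rinv_0_lt_compat; lra.
rewrite (_ : 1 + u - 1 = u); last by ring.
by rewrite /=; nra.
Qed.

Lemma comb_param_excited : INR #|comb_excited m w| <= 1 * sqrt (INR (m * w).+2).
Proof.
have K_ge0 := pos_INR k.
apply: (Rle_trans _ (INR m)).
  by apply/le_INR/leP; apply: card_comb_excited; [exact: comb_param_m_gt0 | exact: comb_param_w_large].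
have m_le : INR m <= 4 * INR k ^ 2.
  apply: (Rle_trans _ (INR (4 * k * k))); first by apply/le_INR/leP; lia.
  by rewrite -!multE !mult_INR /=; nra.
rewrite Rmult_1_l comb_param_size -(sqrt_square _ (pos_INR m)).
by apply: sqrt_le_1; have := pos_INR m; nra.
Qed.

Lemma comb_param_hit_bound :
  / 2 * exp (sqrt (sqrt (INR (m * w).+2)) / 100) <= lam ^ m.+1 - 1.
Proof.
have two_pow_le : 2 ^ k <= lam ^ m.+1.
  have kk_gt0 : (0 < 4 * k * k)%nat by nia.
  rewrite (prednK kk_gt0) -!multE (pow_mult _ (4 * k)%coq_nat k).
  have INR_4k : INR (4 * k)%coq_nat = 4 * INR k by rewrite mult_INR /=; ring.
  by apply: pow_incr; split; [lra | rewrite -INR_4k; apply: two_le_pow_1_inv; lia].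
have two_le : 2 <= 2 ^ k by rewrite -{1}(pow_1 2); apply: Rle_pow; [lra | apply/leP].
by rewrite comb_param_size; have := exp_qroot_le_two_pow k_gt0; lra.
Qed.

End CombParameters.

Local Close Scope R_scope.

Theorem theorem1p2 :
  exists c C : R, (0 < c)%R /\ (0 < C)%R /\
  forall N : nat, exists n : nat, (N <= n)%N /\
    exists (e : rel 'I_n) (a b : 'I_n) (X : {set 'I_n}),
      simple_graph e /\ connected_graph e /\ max_degree_3 e /\
      (INR #|X| <= C * sqrt (INR n))%R /\
      forall g : 'I_n -> seq 'I_n, geodesic_choice e b g ->
        expected_hit_ge e X g a b (c * exp (sqrt (sqrt (INR n)) / 100))%R.
Proof.
exists (/ 2)%R, 1%R; split; [lra | split; [lra | move=> N]].
have k_gt0 : 0 < N.+1 by [].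
have m_gt0 := comb_param_m_gt0 k_gt0; have w_large := comb_param_w_large k_gt0.
exists ((4 * N.+1 * N.+1).-1 * (8 * N.+1 * N.+1 + 2)).+2; split; first by nia.
exists (@comb _ _), (comb_a _ _), (comb_b _ _), (comb_excited _ _).
split; first exact: comb_simple.
split; first exact: comb_connected.
split; first exact: comb_max_degree_3.
split; first exact: comb_param_excited.
move=> g geo_g; apply: expected_hit_ge_le (comb_param_hit_bound k_gt0) _.
exact: (comb_expected_hit_ge m_gt0 w_large (comb_param_lam_ge1 k_gt0)
  (comb_param_lam_close k_gt0) geo_g).
Qed.
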